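(* The assignment $\Xi$ is a functor from the category $\mathfrak{S}$ of Bochvar systems to the category $\mathfrak{B}$ of Bochvar algebras. It sends a Bochvar system $\mathbb{B}$ to $\mathbf{A}_{\mathbb{B}}$, and a morphism $g:\langle\mathbf{B}_1,\mathbf{I}_1\rangle\to\langle\mathbf{B}_2,\mathbf{I}_2\rangle$ to the map $\Xi(g)(a/[i))=g(a)/[g(i))$ for $a\in B_1$, $i\in I_1$. In particular, $\Xi(g)$ is a well-defined homomorphism of Bochvar algebras $\mathbf{A}_{\mathbb{B}_1}\to\mathbf{A}_{\mathbb{B}_2}$.
   Context: A Bochvar system is a pair $\langle\mathbf{B},\mathbf{I}\rangle$ with $\mathbf{B}$ a Boolean algebra and $I\subseteq B$ containing $1$ and closed under $\wedge$. A morphism $\langle\mathbf{B}_1,\mathbf{I}_1\rangle\to\langle\mathbf{B}_2,\mathbf{I}_2\rangle$ is a Boolean homomorphism $g$ with $g(I_1)\subseteq I_2$. $\mathbf{WK}^e$ is the three-element algebra on $\{0,\tfrac12,1\}$ of type $\langle\wedge,\vee,\neg,J_2,0,1\rangle$. Its operations are: - $\neg$ swaps $0,1$ and fixes $\tfrac12$; - $\wedge,\vee$ are Boolean on $\{0,1\}$ and return $\tfrac12$ if some argument is $\tfrac12$; - $J_2(1)=1$ and $J_2(\tfrac12)=J_2(0)=0$. Bochvar algebras are the members of $ISP(\mathbf{WK}^e)$. For a Bochvar system $\mathbb{B}=\langle\mathbf{B},\mathbf{I}\rangle$, $\mathbf{A}_{\mathbb{B}}$ is the unique Bochvar algebra whose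 $\{\wedge,\vee,\neg,0,1\}$-reduct is the Płonka sum of the following system: - index join-semilattice $I$ ordered dually to $\mathbf{B}$; - fibres $\mathbf{B}/[i)$, the quotient of $\mathbf{B}$ by the congruence of the principal filter $[i)$; - maps $p_{ij}(a/[i))=a/[j)$ for $j\le_{\mathbf{B}}i$. In a Płonka sum, operations are computed by mapping the arguments via the $p_{ij}$ into the fibre indexed by the join of their indices. $J_2$ sends $a/[i)$ to the unique element of the bottom fibre $\mathbf{B}/[1)\cong\mathbf{B}$ below $i$ that is congruent to $a$ modulo $[i)$. *)

From HB Require Import structures.
From mathcomp Require Import all_boot all_order.
Import Order.Theory.
Set Implicit Arguments. Unset Strict Implicit. Unset Printing Implicit Defensive.
Local Open Scope order_scope.

Definition boolean_hom d1 d2 (B1 : ctbDistrLatticeType d1)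
    (B2 : ctbDistrLatticeType d2) (g : B1 -> B2) : Prop :=
  [/\ {morph g : x y / x `&` y}, {morph g : x y / x `|` y},
      {morph g : x / ~` x}, g \bot = \bot & g \top = \top].

Definition bochvar_system d (B : ctbDistrLatticeType d) (I : {pred B}) : Prop :=
  (\top \in I) /\ {in I &, forall i j, i `&` j \in I}.

Definition system_morphism d1 d2 (B1 : ctbDistrLatticeType d1)
    (B2 : ctbDistrLatticeType d2) (I1 : {pred B1}) (I2 : {pred B2})
    (g : B1 -> B2) : Prop :=
  boolean_hom g /\ {in I1, forall i, g i \in I2}.

(* The congruence of the principal filter [i) = {c | i <= c}:
   a ~ b  iff  a /\ c = b /\ c for some c in [i). *)
Definition filter_congr d (B : ctbDistrLatticeType d) (i a b : B) : Prop :=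
  exists c, i <= c /\ a `&` c = b `&` c.

(* An element a/[i) of the fibre B/[i) (i \in I) is
   represented by the pair (i, a /\ i): the class a/[i) is determined by its
   canonical representative a /\ i (see cls_eq below). *)
Definition cls d (B : ctbDistrLatticeType d) (i a : B) : B * B := (i, a `&` i).

Lemma cls_eq d (B : ctbDistrLatticeType d) (i a b : B) :
  cls i a = cls i b <-> filter_congr i a b.
Proof.
split.
  by move=> [] E; exists i; split.
move=> [c [ic E]]; congr (_, _).
have -> : i = c `&` i by apply/esym/meet_idPr.
by rewrite !meetA E.
Qed.

Definition AB_carrier d (B : ctbDistrLatticeType d) (I : {pred B}) (x : B * B)
  : bool := (x.1 \in I) && (x.2 <= x.1).

(* Operations of A_B (Plonka sum: the index of the result is the join in I,
   i.e. the meet in B, and arguments are transported by p_ij a/[i) = a/[j)). *)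
Definition AB_meet d (B : ctbDistrLatticeType d) (x y : B * B) : B * B :=
  cls (x.1 `&` y.1) (x.2 `&` y.2).
Definition AB_join d (B : ctbDistrLatticeType d) (x y : B * B) : B * B :=
  cls (x.1 `&` y.1) (x.2 `|` y.2).
Definition AB_neg d (B : ctbDistrLatticeType d) (x : B * B) : B * B :=
  cls x.1 (~` x.2).
Definition AB_J2 d (B : ctbDistrLatticeType d) (x : B * B) : B * B :=
  cls \top x.2.
Definition AB_zero d (B : ctbDistrLatticeType d) : B * B := cls \top \bot.
Definition AB_one d (B : ctbDistrLatticeType d) : B * B := cls \top \top.

Definition Xi d1 d2 (B1 : ctbDistrLatticeType d1)
    (B2 : ctbDistrLatticeType d2) (g : B1 -> B2) (x : B1 * B1) : B2 * B2 :=
  cls (g x.1) (g x.2).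

From HB Require Import structures.
From mathcomp Require Import all_boot all_order.
Import Order.Theory.
Local Open Scope order_scope.

(* Every operation of A_B commutes with taking classes: its value on
   a/[i), b/[j) is the class of the Boolean operation applied to a, b, at the
   index i /\ j.  A Boolean homomorphism g commutes with taking classes, since
   g (a /\ i) = g a /\ g i, so Xi(g) commutes with all the operations; being
   monotone, g also maps the filter [i) into [g i), so it respects the
   congruences. *)

Section Classes.
Variables (d : Order.disp_t) (B : ctbDistrLatticeType d).
Implicit Types i j k a b : B.

Lemma meet_restrict k i a : k <= i -> a `&` i `&` k = a `&` k.
Proof. by move=> /meet_idPr ki; rewrite -meetA ki. Qed.

Lemma cls_restrict k i a : k <= i -> cls k (a `&` i) = cls k a.
Proof. by move=> ki; rewrite /cls meet_restrict. Qed.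

Lemma AB_meet_cls i j a b :
  AB_meet (cls i a) (cls j b) = cls (i `&` j) (a `&` b).
Proof. by rewrite /AB_meet /= meetACA cls_restrict. Qed.

Lemma AB_join_cls i j a b :
  AB_join (cls i a) (cls j b) = cls (i `&` j) (a `|` b).
Proof.
by rewrite /AB_join /cls /= !meetUl !meet_restrict ?leIl ?leIr.
Qed.

Lemma AB_neg_cls i a : AB_neg (cls i a) = cls i (~` a).
Proof. by rewrite /AB_neg /cls /= complI meetUl meetCx joinx0. Qed.

End Classes.

Section XiHomomorphism.
Variables (d1 d2 : Order.disp_t).
Variables (B1 : ctbDistrLatticeType d1) (B2 : ctbDistrLatticeType d2).
Variable g : B1 -> B2.
Hypothesis gI : {morph g : x y / x `&` y}.

Lemma meet_morph_homo : {homo g : x y / x <= y}.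
Proof. by move=> x y /meet_idPl xy; apply/meet_idPl; rewrite -gI xy. Qed.

Lemma filter_congr_morph i a b :
  filter_congr i a b -> filter_congr (g i) (g a) (g b).
Proof.
move=> [c [ic abc]]; exists (g c); split; first exact: meet_morph_homo.
by rewrite -!gI abc.
Qed.

Lemma Xi_cls i a : Xi g (cls i a) = cls (g i) (g a).
Proof. by rewrite /Xi /= gI cls_restrict. Qed.

Lemma Xi_meet : {morph Xi g : x y / AB_meet x y}.
Proof. by move=> [i a] [j b]; rewrite {1}/AB_meet Xi_cls !gI AB_meet_cls. Qed.

Lemma Xi_join : {morph g : x y / x `|` y} -> {morph Xi g : x y / AB_join x y}.
Proof.
by move=> gU [i a] [j b]; rewrite {1}/AB_join Xi_cls gI gU AB_join_cls.
Qed.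

Lemma Xi_neg : {morph g : x / ~` x} -> {morph Xi g : x / AB_neg x}.
Proof. by move=> gC [i a]; rewrite {1}/AB_neg Xi_cls gC AB_neg_cls. Qed.

Lemma Xi_J2 (x : B1 * B1) :
  g \top = \top -> x.2 <= x.1 -> Xi g (AB_J2 x) = AB_J2 (Xi g x).
Proof.
case: x => i a g1 /= /meet_idPl ai.
by rewrite /AB_J2 Xi_cls g1 /= -gI ai.
Qed.

Lemma Xi_zero : g \bot = \bot -> g \top = \top -> Xi g (AB_zero B1) = AB_zero B2.
Proof. by move=> g0 g1; rewrite /AB_zero Xi_cls g0 g1. Qed.

Lemma Xi_one : g \top = \top -> Xi g (AB_one B1) = AB_one B2.
Proof. by move=> g1; rewrite /AB_one Xi_cls g1. Qed.

End XiHomomorphism.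

Lemma Xi_carrier d1 d2 (B1 : ctbDistrLatticeType d1)
    (B2 : ctbDistrLatticeType d2) (I1 : {pred B1}) (I2 : {pred B2})
    (g : B1 -> B2) :
  {in I1, forall i, g i \in I2} ->
  {in AB_carrier I1, forall x, AB_carrier I2 (Xi g x)}.
Proof. by move=> gI12 [i a] /andP[/= iI _]; rewrite /AB_carrier /= gI12 ?leIr. Qed.

Lemma Xi_id d (B : ctbDistrLatticeType d) (x : B * B) :
  x.2 <= x.1 -> Xi id x = x.
Proof. by case: x => i a /= /meet_idPl; rewrite /Xi /cls => ->. Qed.

Lemma Xi_comp d1 d2 d3 (B1 : ctbDistrLatticeType d1)
    (B2 : ctbDistrLatticeType d2) (B3 : ctbDistrLatticeType d3)
    (g : B1 -> B2) (h : B2 -> B3) :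
  {morph h : x y / x `&` y} -> forall x, Xi (h \o g) x = Xi h (Xi g x).
Proof. by move=> hI x; rewrite [RHS]Xi_cls. Qed.

Theorem lemma3p8
  (d1 d2 d3 : Order.disp_t)
  (B1 : ctbDistrLatticeType d1) (B2 : ctbDistrLatticeType d2)
  (B3 : ctbDistrLatticeType d3)
  (I1 : {pred B1}) (I2 : {pred B2}) (I3 : {pred B3})
  (HI1 : bochvar_system I1) (HI2 : bochvar_system I2) (HI3 : bochvar_system I3)
  (g : B1 -> B2) (h : B2 -> B3)
  (Hg : system_morphism I1 I2 g) (Hh : system_morphism I2 I3 h) :
  (* Xi(g) is well defined on classes a/[i) and given by the stated formula *)
  [/\ (forall i a b, i \in I1 -> filter_congr i a b ->
         cls (g i) (g a) = cls (g i) (g b)),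
      (forall i a, i \in I1 -> Xi g (cls i a) = cls (g i) (g a)),
  (* Xi(g) maps A_{B1} into A_{B2} and is a homomorphism of Bochvar algebras *)
      {in AB_carrier I1, forall x, AB_carrier I2 (Xi g x)},
      [/\ {in AB_carrier I1 &, forall x y, Xi g (AB_meet x y) = AB_meet (Xi g x) (Xi g y)},
          {in AB_carrier I1 &, forall x y, Xi g (AB_join x y) = AB_join (Xi g x) (Xi g y)},
          {in AB_carrier I1, forall x, Xi g (AB_neg x) = AB_neg (Xi g x)},
          {in AB_carrier I1, forall x, Xi g (AB_J2 x) = AB_J2 (Xi g x)} &
          Xi g (AB_zero B1) = AB_zero B2 /\ Xi g (AB_one B1) = AB_one B2] &
  (* functoriality: identities and composition are preserved *)
      {in AB_carrier I1, forall x, Xi id x = x} /\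
      {in AB_carrier I1, forall x, Xi (h \o g) x = Xi h (Xi g x)}].
Proof.
case: Hg => [[gI gU gC g0 g1] gI12]; case: Hh => [[hI _ _ _ _] _].
split.
- by move=> i a b _ abi; apply/cls_eq/filter_congr_morph.
- by move=> i a _; apply: Xi_cls.
- exact: Xi_carrier.
- split.
  + by move=> x y _ _; apply: Xi_meet.
  + by move=> x y _ _; apply: Xi_join.
  + by move=> x _; apply: Xi_neg.
  + by move=> x /andP[_]; apply: Xi_J2.
  + by split; [apply: Xi_zero | apply: Xi_one].
- split.
  + by move=> x /andP[_]; apply: Xi_id.
  + by move=> x _; apply: Xi_comp.
Qed.
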